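(* Let $\Gamma$ be a finite group acting linearly on a finite-dimensional complex vector space $V$, consider the cotangent lifted action on $T^*V=V\times V^*$, let $R=\mathbb C[T^*V]$, let $\pi:\operatorname{Der}(R)^\Gamma\to\operatorname{Der}(R^\Gamma)$ be the restriction map $X\mapsto X|_{R^\Gamma}$, and let $\lambda:\operatorname{Der}(R^\Gamma)\to\operatorname{Der}(R)^\Gamma$ be an $R^\Gamma$-linear map with $\pi\lambda=\operatorname{id}_{\operatorname{Der}(R^\Gamma)}$. Then $\omega(X,Y):=\omega_0(\lambda(X),\lambda(Y))$, for $X,Y\in\operatorname{Der}(R^\Gamma)$, defines a non-degenerate closed form $\omega\in\operatorname{Alt}^2_{R^\Gamma}(\operatorname{Der}(R^\Gamma),R^\Gamma)$.
   Context: $\omega_0=\sum_i\mathrm dq^i\wedge\mathrm dp_i$ is the canonical symplectic form on $T^*V$, evaluated on derivations of $R$. $\Gamma$ acts on derivations by $X\mapsto(\gamma^{-1})^*X\gamma^*$; $\operatorname{Der}(R)^\Gamma$ denotes invariant derivations. (It is known that $\pi$ is surjective, so such a section $\lambda$ exists.) Closedness is with respect to the naive de Rham differential of the Lie-Rinehart algebra $(\operatorname{Der}(R^\Gamma),R^\Gamma)$: $(\mathrm d\omega)(X_0,X_1,X_2)=\sum_i(-1)^iX_i(\omega(\dots\widehat{X_i}\dots))+\sum_{i<j}(-1)^{i+j}\omega([X_i,X_j],\dots\widehat{X_i}\dots\widehat{X_j}\dots)$. Non-degenerate means $\omega(X,Y)=0$ for all $Y$ implies $X=0$. *)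

From HB Require Import structures.
From mathcomp Require Import all_boot all_order all_algebra all_fingroup.
From mathcomp Require Import mxrepresentation.
From mathcomp Require Import complex.
From mathcomp Require Import reals.
From mathcomp Require Import mpoly.

Set Implicit Arguments.
Unset Strict Implicit.
Unset Printing Implicit Defensive.

Import GRing.Theory.
Local Open Scope ring_scope.

(* Coordinate ring R = C[T^*V] = C[q_1..q_n, p_1..p_n], V = C^n.
   Variable 'X_(lshift n i) is q_i (i-th coordinate on V),
   variable 'X_(rshift n i) is p_i (i-th coordinate on the dual of V). *)
Definition coordRing (R : realType) (n : nat) := {mpoly complex R [n + n]}.

Section Defs.
Variables (R : realType) (n : nat) (gT : finGroupType) (G : {group gT})
          (rho : mx_representation R[i] G n).

Local Notation RR := (coordRing R n).

Definition qv (i : 'I_n) : RR := 'X_(lshift n i).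
Definition pv (i : 'I_n) : RR := 'X_(rshift n i).

(* Pullback gamma^* along the cotangent-lifted action
   (v, xi) |-> (rho g v, xi o (rho g)^-1) on T^*V = V x V^*:
   gamma^* q_i = sum_j A_ij q_j,  gamma^* p_i = sum_j (A^-1)_ji p_j,
   with A = rho g. *)
Definition act_image (g : gT) (k : 'I_(n + n)) : RR :=
  match split k with
  | inl i => \sum_(j < n) (rho g i j) *: qv j
  | inr i => \sum_(j < n) (invmx (rho g) j i) *: pv j
  end.

Definition act (g : gT) (f : RR) : RR :=
  f \mPo [tuple act_image g k | k < n + n].

Definition Ginvariant (f : RR) : bool := [forall g in G, act g f == f].

Definition is_der (D : RR -> RR) : Prop :=
  (forall (c : R[i]) f h, D (c *: f + h) = c *: D f + D h) /\
  (forall f h, D (f * h) = f * D h + D f * h).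

Definition der_invariant (D : RR -> RR) : Prop :=
  forall g, g \in G -> forall f, act g^-1 (D (act g f)) = D f.

(* C-linear derivations of the subalgebra R^Gamma.  Such a derivation is
   represented by its extension by zero to R (so equality of derivations of
   R^Gamma is equality of functions). *)
Definition is_der_inv (D : RR -> RR) : Prop :=
  [/\ forall f, ~~ Ginvariant f -> D f = 0,
      forall f, Ginvariant f -> Ginvariant (D f),
      forall (c : R[i]) f h, Ginvariant f -> Ginvariant h ->
        D (c *: f + h) = c *: D f + D h &
      forall f h, Ginvariant f -> Ginvariant h ->
        D (f * h) = f * D h + D f * h].

Definition der_scale_add (a : RR) (X Y : RR -> RR) : RR -> RR :=
  fun f => a * X f + Y f.
Definition der_bracket (X Y : RR -> RR) : RR -> RR :=
  fun f => X (Y f) - Y (X f).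

Definition omega0 (X Y : RR -> RR) : RR :=
  \sum_(i < n) (X (qv i) * Y (pv i) - X (pv i) * Y (qv i)).

Definition omega (lam : (RR -> RR) -> (RR -> RR)) (X Y : RR -> RR) : RR :=
  omega0 (lam X) (lam Y).

Definition is_alt2 (w : (RR -> RR) -> (RR -> RR) -> RR) : Prop :=
  [/\ forall X Y, is_der_inv X -> is_der_inv Y -> Ginvariant (w X Y),
      forall a X Y Z, Ginvariant a -> is_der_inv X -> is_der_inv Y ->
        is_der_inv Z -> w (der_scale_add a X Y) Z = a * w X Z + w Y Z,
      forall a X Y Z, Ginvariant a -> is_der_inv X -> is_der_inv Y ->
        is_der_inv Z -> w Z (der_scale_add a X Y) = a * w Z X + w Z Y &
      forall X, is_der_inv X -> w X X = 0].

Definition dR2 (w : (RR -> RR) -> (RR -> RR) -> RR) (X0 X1 X2 : RR -> RR) : RR :=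
  X0 (w X1 X2) - X1 (w X0 X2) + X2 (w X0 X1)
  - w (der_bracket X0 X1) X2 + w (der_bracket X0 X2) X1
  - w (der_bracket X1 X2) X0.

Definition is_closed2 (w : (RR -> RR) -> (RR -> RR) -> RR) : Prop :=
  forall X0 X1 X2, is_der_inv X0 -> is_der_inv X1 -> is_der_inv X2 ->
    dR2 w X0 X1 X2 = 0.

Definition is_nondegenerate2 (w : (RR -> RR) -> (RR -> RR) -> RR) : Prop :=
  forall X, is_der_inv X -> (forall Y, is_der_inv Y -> w X Y = 0) ->
    forall f, X f = 0.

End Defs.

From Pilot Require Import Defs.
From HB Require Import structures.
From mathcomp Require Import all_boot all_order all_algebra all_fingroup.
From mathcomp Require Import mxrepresentation complex reals mpoly.
From mathcomp Require Import ring.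

Set Implicit Arguments.
Unset Strict Implicit.
Unset Printing Implicit Defensive.

Import GRing.Theory.
Local Open Scope ring_scope.

(* A derivation D of R that vanishes on R^Gamma is zero: a coordinate x of
   T^*V is a simple root of Q = prod_(y in Gamma x) (T - y), whose coefficients
   are invariant, so 0 = D (Q x) = Q'(x) * D x.  Hence restriction is injective
   on Der(R)^Gamma, which makes lambda bracket-preserving, and closedness of
   omega follows from that of the constant-coefficient form omega_0.  Gamma
   acts on T^*V by symplectic linear maps, so omega_0 of invariant derivations
   is invariant.  For invariant f the Hamiltonian derivation {f, -} is
   invariant, hence equals lambda of its restriction Y, and omega(X, Y) = - X f
   gives non-degeneracy. *)

Lemma comp_mpolyA (K : comNzRingType) (k : nat) (p : {mpoly K[k]})
    (t s : k.-tuple {mpoly K[k]}) :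
  (p \mPo t) \mPo s = p \mPo [tuple tnth t i \mPo s | i < k].
Proof.
rewrite [p \mPo t]comp_mpolyEX [RHS]comp_mpolyEX raddf_sum /=; apply: eq_bigr => m _.
rewrite comp_mpolyZ !comp_mpolyX rmorph_prod /=; congr (_ *: _).
by apply: eq_bigr => i _; rewrite rmorphXn /= tnth_mktuple.
Qed.

Lemma sum_mx_pairing (K : comNzRingType) (A : comAlgType K) (k : nat)
    (M N : 'M[K]_k) (a b : 'I_k -> A) :
  N *m M = 1%:M ->
  \sum_i (\sum_j M i j *: a j) * (\sum_l N l i *: b l) = \sum_j a j * b j.
Proof.
move=> NM1; under eq_bigr => i _ do rewrite mulr_suml; rewrite exchange_big /=.
apply: eq_bigr => j _; under eq_bigr => i _ do rewrite mulr_sumr; rewrite exchange_big /=.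
have pair_l l : \sum_i (M i j *: a j) * (N l i *: b l) = (N *m M) l j *: (a j * b l).
  rewrite mxE scaler_suml; apply: eq_bigr => i _.
  by rewrite -scalerAl -scalerAr scalerA mulrC.
under eq_bigr => l _ do rewrite pair_l NM1 mxE.
rewrite (bigD1 j) //= big1 => [|l /negbTE neq_lj]; last by rewrite neq_lj scale0r.
by rewrite eqxx scale1r addr0.
Qed.

Section Derivations.
Variables (R : realType) (n : nat).
Local Notation RR := (coordRing R n).

Section DerivationRules.
Variable D : RR -> RR.
Hypothesis D_der : is_der D.

Lemma derD f h : D (f + h) = D f + D h.
Proof. by have [lin _] := D_der; have := lin 1 f h; rewrite !scale1r. Qed.

Lemma der0 : D 0 = 0.
Proof. by apply: (addrI (D 0)); rewrite -derD !addr0. Qed.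

Lemma derZ c f : D (c *: f) = c *: D f.
Proof. by have [lin _] := D_der; rewrite -[c *: f]addr0 lin der0 addr0. Qed.

Lemma derB f h : D (f - h) = D f - D h.
Proof. by rewrite derD -scaleN1r derZ scaleN1r. Qed.

Lemma derM f h : D (f * h) = f * D h + D f * h.
Proof. by have [_ ->] := D_der. Qed.

Lemma der1 : D 1 = 0.
Proof.
have := derM 1 1; rewrite !mul1r mulr1 => D1_double.
by apply: (addrI (D 1)); rewrite addr0 -D1_double.
Qed.

Lemma der_sum (I : Type) (r : seq I) (P : pred I) (F : I -> RR) :
  D (\sum_(i <- r | P i) F i) = \sum_(i <- r | P i) D (F i).
Proof.
by apply: (big_rec2 (fun x y => D x = y)) => [|i x y _ <-]; [exact: der0 | exact: derD].
Qed.

End DerivationRules.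

Lemma der_eq0 (D : RR -> RR) :
  is_der D -> (forall k, D 'X_k = 0) -> forall f, D f = 0.
Proof.
move=> D_der DX0; elim/mpolyind => [|c m p _ _ IHp]; first exact: der0.
rewrite derD // derZ // IHp addr0 mpolyXE_id.
rewrite (big_ind (fun x => D x = 0)) ?scaler0 ?der1 // => [x y Dx0 Dy0|k _].
  by rewrite derM // Dx0 Dy0 mulr0 mul0r addr0.
elim: (m k) => [|e IHe]; first by rewrite expr0 der1.
by rewrite exprS derM // IHe DX0 mulr0 mul0r addr0.
Qed.

Lemma is_derB (D1 D2 : RR -> RR) :
  is_der D1 -> is_der D2 -> is_der (fun f => D1 f - D2 f).
Proof.
move=> D1_der D2_der; split=> [c f h|f h].
  rewrite (derD D1_der) (derD D2_der) (derZ D1_der) (derZ D2_der).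
  by rewrite scalerBr opprD addrACA.
by rewrite (derM D1_der) (derM D2_der) mulrBr mulrBl opprD addrACA.
Qed.

Lemma eq_der (D1 D2 : RR -> RR) : is_der D1 -> is_der D2 ->
  (forall k, D1 'X_k = D2 'X_k) -> forall f, D1 f = D2 f.
Proof.
move=> D1_der D2_der eqX f; apply/eqP; rewrite -subr_eq0; apply/eqP; move: f.
by apply: der_eq0 (is_derB D1_der D2_der) _ => k; rewrite eqX subrr.
Qed.

Lemma is_der_bracket (D1 D2 : RR -> RR) :
  is_der D1 -> is_der D2 -> is_der (der_bracket D1 D2).
Proof.
move=> D1_der D2_der; rewrite /der_bracket; split=> [c f h|f h].
  rewrite !(derD D1_der, derD D2_der, derZ D1_der, derZ D2_der).
  by rewrite scalerBr opprD addrACA.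
rewrite !(derM D1_der, derM D2_der, derD D1_der, derD D2_der); ring.
Qed.

Lemma mderivXU (k l : 'I_(n + n)) : mderiv k ('X_l : RR) = (l == k)%:R.
Proof.
rewrite mderivX mnm1E; case: eqP => [->|_]; last by rewrite scale0r.
have -> : (U_(k) - U_(k) = 0)%MM by apply/mnmP => j; rewrite mnmBE mnm0E subnn.
by rewrite mpolyX0 scale1r.
Qed.

Lemma der_mderivE (D : RR -> RR) : is_der D ->
  forall f, D f = \sum_(k < n + n) D 'X_k * mderiv k f.
Proof.
move=> D_der; apply: eq_der => // [|l].
  split=> [c f h|f h].
    rewrite scaler_sumr -big_split; apply: eq_bigr => k _.
    by rewrite mderivD mderivZ mulrDr scalerAr.
  rewrite mulr_sumr mulr_suml -big_split; apply: eq_bigr => k _; rewrite /= mderivM; ring.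
rewrite (bigD1 l) //= big1 => [|k /negbTE neq_kl]; first by rewrite mderivXU eqxx mulr1 addr0.
by rewrite mderivXU eq_sym neq_kl mulr0.
Qed.

Definition poisson (f h : RR) : RR :=
  \sum_(j < n) (mderiv (rshift n j) f * mderiv (lshift n j) h
                - mderiv (lshift n j) f * mderiv (rshift n j) h).

Lemma poissonC f h : poisson f h = - poisson h f.
Proof.
rewrite /poisson -sumrN; apply: eq_bigr => j _.
by rewrite opprB [in RHS]mulrC [X in _ - X]mulrC.
Qed.

Lemma is_der_poisson f : is_der (poisson f).
Proof.
rewrite /poisson; split=> [c g h|g h].
  rewrite scaler_sumr -big_split; apply: eq_bigr => j _ /=.
  by rewrite !mderivD !mderivZ !mulrDr -!scalerAr scalerBr opprD addrACA.
rewrite mulr_sumr mulr_suml -big_split; apply: eq_bigr => j _ /=.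
by rewrite !mderivM; ring.
Qed.

Lemma poisson_q f j : poisson f (qv R j) = mderiv (rshift n j) f.
Proof.
rewrite /poisson /qv (bigD1 j) //= big1 => [|l neq_lj].
  by rewrite !mderivXU eqxx eq_lrshift mulr0 mulr1 subr0 addr0.
by rewrite !mderivXU eq_lshift eq_lrshift eq_sym (negbTE neq_lj) !mulr0 subr0.
Qed.

Lemma poisson_p f j : poisson f (pv R j) = - mderiv (lshift n j) f.
Proof.
rewrite /poisson /pv (bigD1 j) //= big1 => [|l neq_lj].
  by rewrite !mderivXU eqxx eq_rlshift mulr0 mulr1 sub0r addr0.
by rewrite !mderivXU eq_rshift eq_rlshift eq_sym (negbTE neq_lj) !mulr0 subr0.
Qed.

Lemma eq_omega0 (A A' B B' : RR -> RR) :
  A =1 A' -> B =1 B' -> omega0 A B = omega0 A' B'.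
Proof. by move=> eqA eqB; apply: eq_bigr => i _; rewrite !eqA !eqB. Qed.

Lemma omega0C (A B : RR -> RR) : omega0 A B = - omega0 B A.
Proof.
rewrite /omega0 -sumrN; apply: eq_bigr => i _.
by rewrite opprB [in RHS]mulrC [X in _ - X]mulrC.
Qed.

Lemma omega0_diag (A : RR -> RR) : omega0 A A = 0.
Proof. by apply: big1 => i _; rewrite [X in _ - X]mulrC subrr. Qed.

Lemma omega0_scale_addl a (A B C : RR -> RR) :
  omega0 (der_scale_add a A B) C = a * omega0 A C + omega0 B C.
Proof.
rewrite /omega0 /der_scale_add mulr_sumr -big_split; apply: eq_bigr => i _ /=.
ring.
Qed.

Lemma omega0_scale_addr a (A B C : RR -> RR) :
  omega0 C (der_scale_add a A B) = a * omega0 C A + omega0 C B.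
Proof. by rewrite omega0C omega0_scale_addl !opprD -!mulrN -!omega0C. Qed.

Lemma omega0_change_coord (M N : 'M[R[i]]_n) (A B : RR -> RR)
    (a b c d : 'I_n -> RR) :
  N *m M = 1%:M ->
  (forall i, A (qv R i) = \sum_j M i j *: a j) ->
  (forall i, A (pv R i) = \sum_j N j i *: b j) ->
  (forall i, B (qv R i) = \sum_j M i j *: c j) ->
  (forall i, B (pv R i) = \sum_j N j i *: d j) ->
  omega0 A B = \sum_j (a j * d j - b j * c j).
Proof.
move=> NM1 Aq Ap Bq Bp; rewrite /omega0 !sumrB.
under eq_bigr => i _ do rewrite Aq Bp.
rewrite (sum_mx_pairing _ _ NM1); congr (_ - _).
under eq_bigr => i _ do rewrite Ap Bq mulrC.
by rewrite (sum_mx_pairing _ _ NM1); apply: eq_bigr => j _; rewrite mulrC.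
Qed.

Lemma omega0_poisson (A : RR -> RR) f : is_der A -> omega0 A (poisson f) = - A f.
Proof.
move=> A_der; rewrite (der_mderivE A_der) big_split_ord /= /omega0.
rewrite opprD -!sumrN -big_split /=; apply: eq_bigr => j _.
by rewrite poisson_q poisson_p mulrN.
Qed.

Lemma poisson_omega0 (B : RR -> RR) f : is_der B -> omega0 (poisson f) B = B f.
Proof. by move=> B_der; rewrite omega0C omega0_poisson ?opprK. Qed.

Lemma dR2_omega0 (D0 D1 D2 : RR -> RR) :
  is_der D0 -> is_der D1 -> is_der D2 -> dR2 (@omega0 R n) D0 D1 D2 = 0.
Proof.
move=> D0_der D1_der D2_der; rewrite /dR2 /omega0.
rewrite (der_sum D0_der) (der_sum D1_der) (der_sum D2_der).
rewrite -sumrB -big_split /= -sumrB -big_split /= -sumrB.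
apply: big1 => i _; rewrite /der_bracket.
rewrite !(derB D0_der, derB D1_der, derB D2_der, derM D0_der, derM D1_der, derM D2_der).
ring.
Qed.

Lemma der_horner (D : RR -> RR) (p : {poly RR}) y : is_der D ->
  (forall i, D p`_i = 0) -> D p.[y] = p^`().[y] * D y.
Proof.
move=> D_der; elim/poly_ind: p => [|p c IHp] Dcoef0.
  by rewrite horner0 deriv0 horner0 mul0r der0.
have Dp0 i : D p`_i = 0 by have := Dcoef0 i.+1; rewrite coefD coefMX coefC /= addr0.
have Dc0 : D c = 0 by have := Dcoef0 0%N; rewrite coefD coefMX coefC /= add0r.
rewrite hornerMXaddC derivMXaddC (derD D_der) (derM D_der) (IHp Dp0) Dc0.
by rewrite hornerD hornerM hornerX addr0 mulrDl mulrAC.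
Qed.

End Derivations.

Section Invariants.
Variables (R : realType) (n : nat) (gT : finGroupType) (G : {group gT})
          (rho : mx_representation R[i] G n).
Local Notation RR := (coordRing R n).
Local Notation act := (Defs.act rho).
Local Notation qv := (qv R).
Local Notation pv := (pv R).

Local Notation Tg g := [tuple act_image rho g k | k < n + n].

Lemma actrD g : {morph act g : f h / f + h}.
Proof. exact: comp_mpolyD. Qed.

Lemma actrB g : {morph act g : f h / f - h}.
Proof. exact: comp_mpolyB. Qed.

Lemma actrM g : {morph act g : f h / f * h}.
Proof. exact: (rmorphM (comp_mpoly (Tg g))). Qed.

Lemma actrN g : {morph act g : f / - f}.
Proof. exact: comp_mpolyN. Qed.

Lemma actrZ g c f : act g (c *: f) = c *: act g f.
Proof. exact: comp_mpolyZ. Qed.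

Lemma actr_sum g (I : Type) (r : seq I) (P : pred I) (F : I -> RR) :
  act g (\sum_(i <- r | P i) F i) = \sum_(i <- r | P i) act g (F i).
Proof. exact: (raddf_sum (comp_mpoly (Tg g))). Qed.

Lemma act_q g i : act g (qv i) = \sum_(j < n) rho g i j *: qv j.
Proof.
by rewrite /Defs.act comp_mpolyXU -tnth_nth tnth_mktuple /act_image (unsplitK (inl i)).
Qed.

Lemma act_p g i : act g (pv i) = \sum_(j < n) invmx (rho g) j i *: pv j.
Proof.
by rewrite /Defs.act comp_mpolyXU -tnth_nth tnth_mktuple /act_image (unsplitK (inr i)).
Qed.

Lemma act_mulg g h f : g \in G -> h \in G -> act (h * g)%g f = act g (act h f).
Proof.
move=> gG hG; rewrite /Defs.act comp_mpolyA; congr (comp_mpoly _ f).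
apply: eq_from_tnth => k; rewrite !tnth_mktuple /act_image.
case: (split k) => i; rewrite raddf_sum /=.
  rewrite repr_mxM //.
  under [RHS]eq_bigr => j _ do rewrite comp_mpolyZ [_ \mPo _]act_q scaler_sumr.
  rewrite exchange_big /=; apply: eq_bigr => l _.
  by rewrite mxE scaler_suml; apply: eq_bigr => j _; rewrite scalerA.
rewrite -repr_mxV ?groupM // invMg repr_mxM ?groupV // !repr_mxV //.
under [RHS]eq_bigr => j _ do rewrite comp_mpolyZ [_ \mPo _]act_p scaler_sumr.
rewrite exchange_big /=; apply: eq_bigr => l _.
by rewrite mxE scaler_suml; apply: eq_bigr => j _; rewrite scalerA mulrC.
Qed.

Lemma act_1g f : act 1%g f = f.
Proof.
rewrite /Defs.act -[RHS]comp_mpoly_id; congr (comp_mpoly _ f).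
apply: eq_from_tnth => k; rewrite !tnth_mktuple /act_image -[in RHS](splitK k).
case: (split k) => i /=; rewrite repr_mx1 ?invmx1 (bigD1 i) //= big1 => [|j /negbTE neq_ji].
- by rewrite mxE eqxx scale1r addr0.
- by rewrite mxE eq_sym neq_ji scale0r.
- by rewrite mxE eqxx scale1r addr0.
- by rewrite mxE neq_ji scale0r.
Qed.

Lemma act_invgK g f : g \in G -> act g^-1 (act g f) = f.
Proof. by move=> gG; rewrite -act_mulg ?groupV // mulgV act_1g. Qed.

Lemma GinvariantP f : reflect (forall g, g \in G -> act g f = f) (Ginvariant rho f).
Proof. by apply: (iffP forall_inP) => f_inv g gG; apply/eqP; apply: f_inv. Qed.

(* Rewriting with an [act] law in a goal that also contains non-matching
   [act] terms makes unification unfold [act] (down to [invmx]) and is very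
   slow, so such steps below go through [congr] or [transitivity]. *)
Definition der_conj (g : gT) (D : RR -> RR) : RR -> RR :=
  fun f => act g^-1 (D (act g f)).

Lemma is_der_conj g D : g \in G -> is_der D -> is_der (der_conj g D).
Proof.
move=> gG D_der; split=> [c f h|f h]; rewrite /der_conj.
  by rewrite actrD actrZ (derD D_der) (derZ D_der) actrD actrZ.
rewrite actrM (derM D_der) actrD !actrM.
by congr (_ * _ + _ * _); apply: act_invgK.
Qed.

Lemma der_conjK g D : g \in G -> der_conj g (der_conj g^-1 D) =1 D.
Proof.
move=> gG f; rewrite /der_conj invgK.
transitivity (act g^-1 (act g (D f))); last exact: act_invgK.
by congr (act g^-1 (act g (D _))); apply: act_invgK.
Qed.

Lemma der_conj_q g D i : is_der D ->
  der_conj g D (qv i) = \sum_j rho g i j *: act g^-1 (D (qv j)).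
Proof.
move=> D_der; rewrite /der_conj act_q (der_sum D_der) actr_sum.
by apply: eq_bigr => j _; rewrite (derZ D_der) actrZ.
Qed.

Lemma der_conj_p g D i : is_der D ->
  der_conj g D (pv i) = \sum_j invmx (rho g) j i *: act g^-1 (D (pv j)).
Proof.
move=> D_der; rewrite /der_conj act_p (der_sum D_der) actr_sum.
by apply: eq_bigr => j _; rewrite (derZ D_der) actrZ.
Qed.

Lemma omega0_conj g (A B : RR -> RR) : g \in G -> is_der A -> is_der B ->
  omega0 (der_conj g A) (der_conj g B) = act g^-1 (omega0 A B).
Proof.
move=> gG A_der B_der.
have inv_rho : invmx (rho g) *m rho g = 1%:M by rewrite mulVmx ?repr_mx_unit.
rewrite (omega0_change_coord inv_rho
  (fun i => der_conj_q g i A_der) (fun i => der_conj_p g i A_der)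
  (fun i => der_conj_q g i B_der) (fun i => der_conj_p g i B_der)).
rewrite /omega0 actr_sum; apply: eq_bigr => j _.
by rewrite actrB !actrM.
Qed.

Lemma der_invariant_Ginvariant D f :
  der_invariant rho D -> Ginvariant rho f -> Ginvariant rho (D f).
Proof.
move=> D_inv /GinvariantP f_inv; apply/GinvariantP => g gG.
rewrite -[in RHS](D_inv g^-1%g (groupVr gG) f) invgK.
by congr (act g (D _)); rewrite f_inv ?groupV.
Qed.

Lemma omega0_Ginvariant (A B : RR -> RR) : is_der A -> is_der B ->
  der_invariant rho A -> der_invariant rho B -> Ginvariant rho (omega0 A B).
Proof.
move=> A_der B_der A_inv B_inv; apply/GinvariantP => g gG.
have := omega0_conj (groupVr gG) A_der B_der; rewrite invgK => <-.
exact: eq_omega0 (A_inv _ (groupVr gG)) (B_inv _ (groupVr gG)).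
Qed.

Lemma der_invariant_poisson f : Ginvariant rho f -> der_invariant rho (poisson f).
Proof.
move=> /GinvariantP f_inv g gG h; rewrite -/(der_conj g (poisson f) h).
have conj_der := is_der_conj gG (is_der_poisson f).
have conjV_der := is_der_conj (groupVr gG) (is_der_poisson h).
rewrite -(poisson_omega0 h conj_der).
rewrite -(eq_omega0 (der_conjK (poisson h) gG) (frefl (der_conj g (poisson f)))).
rewrite (omega0_conj gG conjV_der (is_der_poisson f)) (omega0_poisson f conjV_der).
rewrite [RHS]poissonC /der_conj invgK actrN; congr (- _).
transitivity (poisson h (act g^-1 f)); first exact: act_invgK.
by congr (poisson h _); apply: f_inv; rewrite groupV.
Qed.

Definition Gorbit (x : RR) : seq RR := undup [seq act g x | g <- enum G].

Lemma GorbitP x y : reflect (exists2 g, g \in G & y = act g x) (y \in Gorbit x).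
Proof.
rewrite mem_undup; apply: (iffP mapP) => [[g]|[g gG ->]].
  by rewrite mem_enum => gG ->; exists g.
by exists g; rewrite ?mem_enum.
Qed.

Lemma Gorbit_id x : x \in Gorbit x.
Proof. by apply/GorbitP; exists 1%g; rewrite ?group1 ?act_1g. Qed.

Lemma Gorbit_perm x g : g \in G -> perm_eq [seq act g y | y <- Gorbit x] (Gorbit x).
Proof.
move=> gG; apply: uniq_perm; rewrite ?undup_uniq //.
  rewrite map_inj_uniq ?undup_uniq //.
  by apply: (can_inj (g := act g^-1)) => y; apply: act_invgK.
move=> y; apply/mapP/GorbitP => [[_ /GorbitP[h hG ->] ->]|[h hG ->]].
  by exists (h * g)%g; rewrite ?groupM ?act_mulg.
exists (act (h * g^-1)%g x).
  by apply/GorbitP; exists (h * g^-1)%g; rewrite ?groupM ?groupV.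
by rewrite -[in LHS](mulgKV g h); apply: act_mulg; rewrite ?groupM ?groupV.
Qed.

Definition orbit_poly (x : RR) : {poly RR} := \prod_(y <- Gorbit x) ('X - y%:P).

Lemma orbit_poly_coef_Ginvariant x i : Ginvariant rho (orbit_poly x)`_i.
Proof.
apply/GinvariantP => g gG.
have map_orbit_poly : map_poly (comp_mpoly (Tg g)) (orbit_poly x) = orbit_poly x.
  rewrite rmorph_prod /=; under eq_bigr => y _ do rewrite map_polyXsubC.
  rewrite -(big_map (comp_mpoly (Tg g)) xpredT (fun y => 'X - y%:P)).
  exact: perm_big (Gorbit_perm x gG).
by have := congr1 (fun p : {poly RR} => p`_i) map_orbit_poly; rewrite coef_map.
Qed.

Lemma root_orbit_poly x : root (orbit_poly x) x.
Proof. by rewrite root_prod_XsubC Gorbit_id. Qed.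

Lemma orbit_poly_simple_root x : (orbit_poly x)^`().[x] != 0.
Proof.
rewrite /orbit_poly (perm_big _ (perm_to_rem (Gorbit_id x))) big_cons.
rewrite derivM derivXsubC mul1r.
rewrite hornerD hornerM hornerXsubC subrr mul0r addr0 horner_prod prodf_seq_neq0.
apply/allP => y y_rem; rewrite hornerXsubC subr_eq0; apply/implyP => _.
by apply: contraL y_rem => /eqP <-; rewrite mem_rem_uniqF ?undup_uniq.
Qed.

Lemma eq_der_on_invariants (D1 D2 : RR -> RR) : is_der D1 -> is_der D2 ->
  (forall f, Ginvariant rho f -> D1 f = D2 f) -> forall f, D1 f = D2 f.
Proof.
move=> D1_der D2_der eq_inv; have E_der := is_derB D1_der D2_der.
apply: eq_der => // k; apply/eqP; rewrite -subr_eq0.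
have E_coef i : D1 (orbit_poly 'X_k)`_i - D2 (orbit_poly 'X_k)`_i = 0.
  by rewrite eq_inv ?subrr ?orbit_poly_coef_Ginvariant.
have := der_horner 'X_k E_der E_coef.
rewrite (rootP (root_orbit_poly _)) (der0 E_der) => /esym/eqP.
by rewrite mulf_eq0 (negbTE (orbit_poly_simple_root _)) /=; apply.
Qed.

Lemma Ginvariant_scale_add c f h :
  Ginvariant rho f -> Ginvariant rho h -> Ginvariant rho (c *: f + h).
Proof.
move=> /GinvariantP f_inv /GinvariantP h_inv; apply/GinvariantP => g gG.
by rewrite actrD actrZ; congr (_ *: _ + _); [apply: f_inv | apply: h_inv].
Qed.

Lemma GinvariantM f h :
  Ginvariant rho f -> Ginvariant rho h -> Ginvariant rho (f * h).
Proof.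
move=> /GinvariantP f_inv /GinvariantP h_inv; apply/GinvariantP => g gG.
by rewrite actrM; congr (_ * _); [apply: f_inv | apply: h_inv].
Qed.

Lemma Ginvariant0 : Ginvariant rho 0.
Proof. by apply/GinvariantP => g _; apply: comp_mpoly0. Qed.

Lemma der_invariant_bracket (A B : RR -> RR) :
  der_invariant rho A -> der_invariant rho B -> der_invariant rho (der_bracket A B).
Proof.
move=> A_inv B_inv g gG f; rewrite /der_bracket actrB.
have conj_comp (C D : RR -> RR) : der_invariant rho C -> der_invariant rho D ->
    act g^-1 (C (D (act g f))) = C (D f).
  move=> C_inv D_inv; have := act_invgK (D (act g f)) (groupVr gG); rewrite invgK => DK.
  rewrite -[in LHS]DK; exact: etrans (C_inv g gG _) (congr1 C (D_inv g gG f)).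
by rewrite (conj_comp A B A_inv B_inv) (conj_comp B A B_inv A_inv).
Qed.

Definition der_restrict (D : RR -> RR) : RR -> RR :=
  fun f => if Ginvariant rho f then D f else 0.

Lemma is_der_inv_restrict D :
  is_der D -> der_invariant rho D -> is_der_inv rho (der_restrict D).
Proof.
move=> D_der D_inv; rewrite /der_restrict; split.
- by move=> f /negbTE ->.
- by move=> f f_inv; rewrite f_inv; apply: der_invariant_Ginvariant.
- move=> c f h f_inv h_inv.
  rewrite (Ginvariant_scale_add c f_inv h_inv) f_inv h_inv.
  by case: D_der.
- move=> f h f_inv h_inv.
  rewrite (GinvariantM f_inv h_inv) f_inv h_inv.
  by case: D_der.
Qed.

Lemma der_inv_Ginvariant X f :
  is_der_inv rho X -> Ginvariant rho f -> Ginvariant rho (X f).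
Proof. by case=> _ + _ _; apply. Qed.

Lemma der_inv_out X f : is_der_inv rho X -> ~~ Ginvariant rho f -> X f = 0.
Proof. by case=> + _ _ _; apply. Qed.

Section Lifting.
Variable lam : (RR -> RR) -> (RR -> RR).
Hypothesis lam_der :
  forall X, is_der_inv rho X -> is_der (lam X) /\ der_invariant rho (lam X).
Hypothesis lam_linear : forall a X Y, Ginvariant rho a -> is_der_inv rho X ->
  is_der_inv rho Y -> lam (der_scale_add a X Y) = der_scale_add a (lam X) (lam Y).
Hypothesis lam_section :
  forall X, is_der_inv rho X -> forall f, Ginvariant rho f -> lam X f = X f.
Arguments lam_der [X].
Arguments lam_linear [a X Y].
Arguments lam_section [X] _ [f].

Lemma lam_restrict D : is_der D -> der_invariant rho D ->
  forall f, lam (der_restrict D) f = D f.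
Proof.
move=> D_der D_inv; have DR := is_der_inv_restrict D_der D_inv.
apply: (eq_der_on_invariants (lam_der DR).1 D_der) => f f_inv.
by rewrite (lam_section DR f_inv) /der_restrict f_inv.
Qed.

Lemma der_bracket_restrict X Y : is_der_inv rho X -> is_der_inv rho Y ->
  der_bracket X Y = der_restrict (der_bracket (lam X) (lam Y)).
Proof.
move=> DX DY; apply: boolp.funext => f; rewrite /der_bracket /der_restrict.
case: ifP => [f_inv|/negbT f_out].
  rewrite (lam_section DY f_inv) (lam_section DX f_inv).
  rewrite (lam_section DX (der_inv_Ginvariant DY f_inv)).
  by rewrite (lam_section DY (der_inv_Ginvariant DX f_inv)).
rewrite (der_inv_out DY f_out) (der_inv_out DX f_out).
rewrite -(lam_section DX Ginvariant0) -(lam_section DY Ginvariant0).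
by rewrite (der0 (lam_der DX).1) (der0 (lam_der DY).1) subrr.
Qed.

Lemma is_der_inv_bracket X Y :
  is_der_inv rho X -> is_der_inv rho Y -> is_der_inv rho (der_bracket X Y).
Proof.
move=> DX DY; have [lX_der lX_inv] := lam_der DX; have [lY_der lY_inv] := lam_der DY.
rewrite (der_bracket_restrict DX DY).
exact: is_der_inv_restrict (is_der_bracket lX_der lY_der)
  (der_invariant_bracket lX_inv lY_inv).
Qed.

Lemma lam_bracket X Y : is_der_inv rho X -> is_der_inv rho Y ->
  lam (der_bracket X Y) =1 der_bracket (lam X) (lam Y).
Proof.
move=> DX DY; have [lX_der lX_inv] := lam_der DX; have [lY_der lY_inv] := lam_der DY.
rewrite (der_bracket_restrict DX DY).
exact: lam_restrict (is_der_bracket lX_der lY_der)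
  (der_invariant_bracket lX_inv lY_inv).
Qed.

Lemma omega_Ginvariant X Y :
  is_der_inv rho X -> is_der_inv rho Y -> Ginvariant rho (omega lam X Y).
Proof.
move=> DX DY; have [lX_der lX_inv] := lam_der DX; have [lY_der lY_inv] := lam_der DY.
exact: omega0_Ginvariant.
Qed.

Lemma omega_alt2 : is_alt2 rho (omega lam).
Proof.
split=> [|a X Y Z a_inv DX DY _|a X Y Z a_inv DX DY _|X _].
- exact: omega_Ginvariant.
- by rewrite /omega (lam_linear a_inv DX DY) omega0_scale_addl.
- by rewrite /omega (lam_linear a_inv DX DY) omega0_scale_addr.
- exact: omega0_diag.
Qed.

Lemma omega_closed : is_closed2 rho (omega lam).
Proof.
move=> X0 X1 X2 D0 D1 D2.
rewrite /dR2 -(lam_section D0 (omega_Ginvariant D1 D2)).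
rewrite -(lam_section D1 (omega_Ginvariant D0 D2)) -(lam_section D2 (omega_Ginvariant D0 D1)).
rewrite /omega (eq_omega0 (lam_bracket D0 D1) (frefl _)).
rewrite (eq_omega0 (lam_bracket D0 D2) (frefl _)) (eq_omega0 (lam_bracket D1 D2) (frefl _)).
exact: dR2_omega0 (lam_der D0).1 (lam_der D1).1 (lam_der D2).1.
Qed.

Lemma omega_nondegenerate : is_nondegenerate2 rho (omega lam).
Proof.
move=> X DX omegaX0 f.
have [f_inv|f_out] := boolP (Ginvariant rho f); last exact: der_inv_out DX f_out.
have P_der := is_der_poisson f; have P_inv := der_invariant_poisson f_inv.
have := omegaX0 _ (is_der_inv_restrict P_der P_inv).
rewrite /omega (eq_omega0 (frefl _) (lam_restrict P_der P_inv)).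
rewrite (omega0_poisson f (lam_der DX).1) (lam_section DX f_inv).
by move/eqP; rewrite oppr_eq0; move/eqP.
Qed.

End Lifting.

End Invariants.

Theorem mainTheorem7 (R : realType) (n : nat) (gT : finGroupType)
  (G : {group gT}) (rho : mx_representation R[i] G n)
  (lam : (coordRing R n -> coordRing R n) -> (coordRing R n -> coordRing R n)) :
  (* lambda maps Der(R^Gamma) into Der(R)^Gamma *)
  (forall X, is_der_inv rho X -> is_der (lam X) /\ der_invariant rho (lam X)) ->
  (* lambda is R^Gamma-linear *)
  (forall a X Y, Ginvariant rho a -> is_der_inv rho X -> is_der_inv rho Y ->
     lam (der_scale_add a X Y) = der_scale_add a (lam X) (lam Y)) ->
  (* pi o lambda = id : (lambda X) restricted to R^Gamma is X *)
  (forall X, is_der_inv rho X -> forall f, Ginvariant rho f -> lam X f = X f) ->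
  is_alt2 rho (omega lam) /\ is_closed2 rho (omega lam) /\
  is_nondegenerate2 rho (omega lam).
Proof.
move=> lam_der lam_linear lam_section; split; [|split].
- exact: omega_alt2 lam_der lam_linear.
- exact: omega_closed lam_der lam_section.
- exact: omega_nondegenerate lam_der lam_section.
Qed.
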